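(* Let $\alpha>1$ and let $X=\{x_j:j\in J\}\subset\mathbb{R}^2$ be finite. If $s_2^*$ is equidistant from all points of $X$, then $s_\alpha^*=s_2^*$.
   Context: For $\beta>1$, $s_\beta^*$ denotes the unique minimiser of $P_\beta(s,X)=\sum_{j\in J}\|s-x_j\|^\beta+\max_{j\in J}\|s-x_j\|^\beta$ over $s\in\mathbb{R}^2$. *)

From mathcomp Require Import all_boot all_order all_algebra.
From mathcomp Require Import all_classical all_reals all_analysis.
Set Implicit Arguments. Unset Strict Implicit. Unset Printing Implicit Defensive.
Import Order.TTheory GRing.Theory Num.Theory.
Local Open Scope ring_scope.

Definition dist2 {R : realType} (s x : R * R) : R :=
  Num.sqrt ((s.1 - x.1) ^+ 2 + (s.2 - x.2) ^+ 2).

(* P_beta(s, X) = sum_j ||s - x_j||^beta + max_j ||s - x_j||^beta,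
   with X given as a family x : J -> R^2 over a finite index type J.
   The max of nonnegative reals is taken with neutral element 0. *)
Definition Pbeta {R : realType} {J : finType} (beta : R) (x : J -> R * R)
    (s : R * R) : R :=
  \sum_(j : J) powR (dist2 s (x j)) beta
  + \big[Num.max/0]_(j : J) powR (dist2 s (x j)) beta.

Definition is_minimiser {R : realType} {J : finType} (beta : R)
    (x : J -> R * R) (s : R * R) : Prop :=
  forall t : R * R, Pbeta beta x s <= Pbeta beta x t.

Definition equidistant {R : realType} {J : finType} (x : J -> R * R)
    (s : R * R) : Prop :=
  exists r : R, forall j : J, dist2 s (x j) = r.

From mathcomp Require Import all_boot all_order all_algebra.
From mathcomp Require Import all_classical all_reals all_analysis.
From mathcomp Require Import lra ring.
Import Order.TTheory GRing.Theory Num.Theory.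
Set Implicit Arguments.
Unset Strict Implicit.
Unset Printing Implicit Defensive.
Local Open Scope ring_scope.

(* Let c = s_2^* be at distance r from every x_j and put u_j = x_j - c.
   Moving c in a direction w changes P_2 to first order by
   -2 (sum_j <w, u_j> + min_j <w, u_j>), so minimality of c forces this
   bracket to be nonpositive for every w.  For alpha > 1 the tangent line of
   d |-> d^alpha at r gives ||t - x_j||^alpha > r^alpha - K <t - c, u_j> with
   K = alpha r^(alpha - 2) >= 0, strictly as soon as t <> c.  Adding these
   bounds, and the one at an index minimising <t - c, u_j> for the max term,
   yields P_alpha(t) > (|J| + 1) r^alpha = P_alpha(c) for every t <> c. *)

Section PowerTangent.
Variables (R : realType) (a : R).
Hypothesis a_gt1 : 1 < a.

Lemma bernoulli_powR_lt (q : R) :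
  0 <= q -> q != 1 -> a * q < powR q a + a - 1.
Proof.
rewrite le_eqVlt => /predU1P[<- _|q_gt0 q_neq1].
  by rewrite powR0 ?mulr0 ?add0r ?subr_gt0 // gt_eqF // (lt_trans ltr01).
have qE : q = expR (ln q) by rewrite lnK.
set z := ln q in qE *.
have z_neq0 : z != 0 by apply: contra q_neq1 => /eqP z0; rewrite qE z0 expR0.
have powE : powR q a = expR z * expR ((a - 1) * z).
  by rewrite /powR gt_eqF // -/z -expRD; congr expR; ring.
have gt1 : 1 + (a - 1) * z < expR ((a - 1) * z).
  by apply: expR_gt1Dx; rewrite mulf_neq0 // subr_eq0 gt_eqF.
have ltexp : expR z * (1 - z) < 1.
  have : 1 - z < expR (- z) by apply: expR_gt1Dx; rewrite oppr_eq0.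
  by rewrite -(ltr_pM2l (expR_gt0 z)) -expRD subrr expR0.
have ez_gt0 := expR_gt0 z.
rewrite powE {1}qE.
have : expR z * (1 + (a - 1) * z) < expR z * expR ((a - 1) * z).
  by rewrite ltr_pM2l.
have : 0 < (a - 1) * (1 - expR z * (1 - z)) by rewrite mulr_gt0 // subr_gt0.
lra.
Qed.

(* [a * powR r a / r] is the derivative of [d |-> powR d a] at [r]. *)
Lemma powR_tangent_lt (r d : R) : 0 < r -> 0 <= d -> d != r ->
  powR r a + a * (powR r a / r) * (d - r) < powR d a.
Proof.
move=> r_gt0 d_ge0 d_neq_r.
have rP_gt0 : 0 < powR r a by rewrite powR_gt0.
have dE : d = d / r * r by rewrite divfK ?gt_eqF.
have -> : powR d a = powR (d / r) a * powR r a.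
  by rewrite {1}dE powRM ?divr_ge0 // ltW.
have -> : powR r a + a * (powR r a / r) * (d - r)
    = (1 + a * (d / r) - a) * powR r a by field; rewrite gt_eqF.
rewrite ltr_pM2r //.
have : a * (d / r) < powR (d / r) a + a - 1.
  apply: bernoulli_powR_lt; first by rewrite divr_ge0 // ltW.
  by apply: contra d_neq_r => /eqP dr1; rewrite dE dr1 mul1r.
lra.
Qed.

End PowerTangent.

Section PlaneGeometry.
Variable R : realType.
Implicit Types (c s t y v w : R * R).

Definition dot v w : R := v.1 * w.1 + v.2 * w.2.

Lemma dot_ge0 v : 0 <= dot v v.
Proof. by rewrite /dot -!expr2 addr_ge0 ?sqr_ge0. Qed.

Lemma sqr_dist2 s y : dist2 s y ^+ 2 = dot (y - s) (y - s).
Proof.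
rewrite /dist2 sqr_sqrtr ?addr_ge0 ?sqr_ge0 // /dot /=; ring.
Qed.

Lemma dot_sqr_le v w : dot v w ^+ 2 <= dot v v * dot w w.
Proof.
rewrite -subr_ge0.
have -> : dot v v * dot w w - dot v w ^+ 2 = (v.1 * w.2 - v.2 * w.1) ^+ 2.
  by rewrite /dot; ring.
exact: sqr_ge0.
Qed.

Lemma sqr_dist2_cosine c t y :
  dist2 t y ^+ 2 = dist2 c y ^+ 2 - 2 * dot (t - c) (y - c) + dot (t - c) (t - c).
Proof. by rewrite !sqr_dist2 /dot /=; ring. Qed.

Lemma powR_dist2_gt_linear (a r : R) c t y : 1 < a -> dist2 c y = r -> t != c ->
  powR r a - a * (powR r a / r ^+ 2) * dot (t - c) (y - c) < powR (dist2 t y) a.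
Proof.
move=> a_gt1 cy_r t_neq_c.
set d := dist2 t y; set v := dot (t - c) (y - c); set W := dot (t - c) (t - c).
have d_ge0 : 0 <= d := sqrtr_ge0 _.
have r_ge0 : 0 <= r by rewrite -cy_r sqrtr_ge0.
have W_gt0 : 0 < W.
  rewrite lt_def dot_ge0 andbT; apply: contra t_neq_c.
  rewrite /W /dot /= -!expr2 paddr_eq0 ?sqr_ge0 //.
  rewrite !sqrf_eq0 !subr_eq0 => /andP[/eqP e1 /eqP e2].
  by rewrite (surjective_pairing t) (surjective_pairing c) e1 e2.
have dE : d ^+ 2 = r ^+ 2 - 2 * v + W by rewrite /d (sqr_dist2_cosine c) cy_r.
have CS : v ^+ 2 <= r ^+ 2 * W by rewrite -cy_r sqr_dist2 mulrC; exact: dot_sqr_le.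
have [r0|r_neq0] := eqVneq r 0.
  have v0 : v = 0.
    apply/eqP; rewrite -sqrf_eq0 eq_le sqr_ge0 andbT.
    by move: CS; rewrite r0 [0 ^+ 2]expr2 !mul0r.
  have d_gt0 : 0 < d.
    by rewrite lt_def d_ge0 andbT; apply/eqP => d0; move: dE; rewrite d0 r0 v0; lra.
  rewrite r0 v0 powR0 ?mulr0 ?subr0 ?powR_gt0 // gt_eqF //; lra.
have r_gt0 : 0 < r by rewrite lt_def r_neq0.
have rP_gt0 : 0 < powR r a by rewrite powR_gt0.
set K := a * (powR r a / r ^+ 2).
have K_gt0 : 0 < K by rewrite mulr_gt0 ?divr_gt0 ?exprn_gt0 //; lra.
have [d_eq_r|d_neq_r] := eqVneq d r.
  have v_gt0 : 0 < v by move: dE; rewrite d_eq_r; lra.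
  by rewrite d_eq_r -[ltRHS]subr0 ltrD2l ltrN2 mulr_gt0.
apply: le_lt_trans (powR_tangent_lt a_gt1 r_gt0 d_ge0 d_neq_r).
have -> : a * (powR r a / r) * (d - r) = K * (r * d - r ^+ 2).
  by rewrite /K; field; rewrite gt_eqF.
rewrite lerD2l -mulrN ler_pM2l //.
have : (r ^+ 2 - v) ^+ 2 <= (r * d) ^+ 2 by rewrite exprMn dE; nra.
have : 0 <= r * d by rewrite mulr_ge0.
nra.
Qed.

End PlaneGeometry.

Section SumMax.
Variables (R : realType) (J : finType).
Implicit Types (f g v : J -> R).

Lemma sum_bigmax_const f (C : R) (j0 : J) : 0 <= C -> (forall j, f j = C) ->
  \sum_j f j + \big[Num.max/0]_j f j = (#|J|%:R + 1) * C.
Proof.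
move=> C_ge0 fC; rewrite (eq_bigr _ (fun j _ => fC j)) sumr_const.
have -> : \big[Num.max/0]_j f j = C.
  apply/le_anti; rewrite bigmax_le //= -?(fC j0) ?le_bigmax // => j _.
  by rewrite !fC.
by rewrite mulrDl mul1r mulr_natl.
Qed.

Lemma sum_bigmax_gt f g (k : J) : (forall j, g j < f j) ->
  \sum_j g j + g k < \sum_j f j + \big[Num.max/0]_j f j.
Proof.
move=> gf; apply: ltr_leD; first by apply: ltr_sum => [|j _]; [apply/hasP; exists k|].
exact: le_trans (ltW (gf k)) (le_bigmax _ _ k).
Qed.

Lemma sum_bigmax_le f g (k : J) : (forall j, 0 <= f j) -> (forall j, f j <= g j) ->
  (forall j, g j <= g k) -> \sum_j f j + \big[Num.max/0]_j f j <= \sum_j g j + g k.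
Proof.
move=> f_ge0 fg gk; apply: lerD; first by apply: ler_sum => j _.
by apply: bigmax_le => [|j _]; [exact: le_trans (f_ge0 k) (fg k) | exact: le_trans (fg j) (gk j)].
Qed.

Lemma sum_affine_add (A B : R) v (k : J) :
  \sum_j (A + B * v j) + (A + B * v k) = (#|J|%:R + 1) * A + B * (\sum_j v j + v k).
Proof. by rewrite big_split /= sumr_const -mulr_sumr -mulr_natl; ring. Qed.

End SumMax.

Lemma le0_of_forall_gt0_le_mul (R : realFieldType) (S A : R) :
  (forall eps, 0 < eps -> S <= eps * A) -> S <= 0.
Proof.
move=> le_epsA; apply/ler_addgt0Pr => e e_gt0; rewrite add0r.
have nA_gt0 : 0 < `|A| + 1 by rewrite ltr_wpDl.
apply: le_trans (le_epsA _ (divr_gt0 e_gt0 nA_gt0)) _.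
rewrite mulrAC ler_pdivrMr // ler_pM2l //.
by have := ler_norm A; lra.
Qed.

Section Minimisers.
Variables (R : realType) (J : finType) (x : J -> R * R).

Lemma is_minimiser2_first_order (c w : R * R) (r : R) (k : J) :
  is_minimiser 2 x c -> (forall j, dist2 c (x j) = r) ->
  (forall j, dot w (x k - c) <= dot w (x j - c)) ->
  \sum_j dot w (x j - c) + dot w (x k - c) <= 0.
Proof.
move=> min2 cx_r hk.
set v := fun j => dot w (x j - c); set S := \sum_j v j + v k.
have r_ge0 : 0 <= r by rewrite -(cx_r k) sqrtr_ge0.
have Pc : Pbeta 2 x c = (#|J|%:R + 1) * r ^+ 2.
  by rewrite /Pbeta (sum_bigmax_const k (sqr_ge0 r)) // => j; rewrite cx_r powR_mulrn.
have shiftE eps j : powR (dist2 (c.1 + eps * w.1, c.2 + eps * w.2) (x j)) 2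
    = r ^+ 2 + eps ^+ 2 * dot w w + (- 2 * eps) * v j.
  by rewrite powR_mulrn ?sqrtr_ge0 // -(cx_r j) !sqr_dist2 /v /dot /=; ring.
have Pshift eps : 0 <= eps -> Pbeta 2 x (c.1 + eps * w.1, c.2 + eps * w.2)
    <= (#|J|%:R + 1) * (r ^+ 2 + eps ^+ 2 * dot w w) + (- 2 * eps) * S.
  move=> eps_ge0; rewrite -sum_affine_add.
  apply: sum_bigmax_le => j; [exact: powR_ge0 | by rewrite shiftE |].
  by rewrite lerD2l ler_wnM2l ?hk //; lra.
apply: (@le0_of_forall_gt0_le_mul _ _ ((#|J|%:R + 1) * dot w w / 2)) => eps eps_gt0.
have := min2 (c.1 + eps * w.1, c.2 + eps * w.2).
move/le_trans/(_ (Pshift eps (ltW eps_gt0))); rewrite Pc => le_shift.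
rewrite -(ler_pM2l (_ : 0 < 2 * eps)) ?mulr_gt0 //.
lra.
Qed.

Lemma Pbeta_lt_off_centre (a r : R) (c t : R * R) (k : J) :
  1 < a -> (forall j, dist2 c (x j) = r) -> t != c ->
  \sum_j dot (t - c) (x j - c) + dot (t - c) (x k - c) <= 0 ->
  Pbeta a x c < Pbeta a x t.
Proof.
move=> a_gt1 cx_r t_neq_c S_le0.
have Pc : Pbeta a x c = (#|J|%:R + 1) * powR r a.
  by rewrite /Pbeta (sum_bigmax_const k (powR_ge0 r a)) // => j; rewrite cx_r.
set K := a * (powR r a / r ^+ 2).
have K_ge0 : 0 <= K.
  by rewrite mulr_ge0 ?divr_ge0 ?powR_ge0 ?sqr_ge0 // ltW // (lt_trans ltr01).
have tangent_lt j :
    powR r a + - K * dot (t - c) (x j - c) < powR (dist2 t (x j)) a.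
  by rewrite mulNr; exact: powR_dist2_gt_linear a_gt1 (cx_r j) t_neq_c.
rewrite Pc; apply: le_lt_trans (sum_bigmax_gt k tangent_lt).
rewrite sum_affine_add lerDl.
by rewrite mulr_le0 // oppr_le0.
Qed.

End Minimisers.

Unset Implicit Arguments.

Theorem proposition6 (R : realType) (J : finType) (j0 : J)
    (x : J -> R * R) (alpha : R) (s2 salpha : R * R) :
  1 < alpha ->
  is_minimiser 2 x s2 ->
  equidistant x s2 ->
  is_minimiser alpha x salpha ->
  salpha = s2.
Proof.
move=> alpha_gt1 min2 [r s2x_r] min_alpha.
have [//|salpha_neq_s2] := eqVneq salpha s2.
set v := fun j => dot (salpha - s2) (x j - s2).
have [k _ k_min] := @arg_minP _ _ J j0 predT v isT.
have S_le0 := is_minimiser2_first_order min2 s2x_r (fun j => k_min j isT).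
have := Pbeta_lt_off_centre alpha_gt1 s2x_r salpha_neq_s2 S_le0.
by rewrite ltNge min_alpha.
Qed.
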